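(* Let $g$ be a connected graph, let $\varphi$ be a set of pairwise non-crossing minimal separators of $g$, and let $S\in\varphi$ be a clique of $g$. Let $c_1,\dots,c_k$ be the connected components of $g\setminus S$ and let $\mathcal{C}(S)=\{g_{|V(c_i)\cup N_g(V(c_i))}: 1\le i\le k\}$. Then: (1) neither $S$ nor any subset of $S$ is a minimal separator of any graph in $\mathcal{C}(S)$; (2) for every $S'\in\varphi\setminus\{S\}$ there exists $c\in\mathcal{C}(S)$ with $S'\subseteq V(c)$.
   Context: Graphs are finite, simple and undirected. $g_{|U}$ is the subgraph induced by $U$, $g\setminus S=g_{|V(g)\setminus S}$, and $N_g(U)=\bigcup_{v\in U}N_g(v)\setminus U$. For nodes $u,v$, a set $S\subseteq V(g)$ is a $(u,v)$-separator if $u,v$ lie in distinct connected components of $g\setminus S$; it is a minimal $(u,v)$-separator if no proper subset is one; $S$ is a minimal separator if it is a minimal $(u,v)$-separator for some $u,v$. Two minimal separators $S,T$ cross if there are $u,v\in T$ such that $S$ is a $(u,v)$-separator. *)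

(* A graph g is given by a vertex set V : {set T} inside a
   finType T together with a symmetric irreflexive edge relation e : rel T.
   Induced subgraph g_|U is then (U, e) for U \subset V. *)
From mathcomp Require Import all_boot.
Set Implicit Arguments. Unset Strict Implicit. Unset Printing Implicit Defensive.

Section Graphs.
Variable T : finType.
Variable e : rel T.

Definition restr (U : {set T}) : rel T := fun x y => [&& x \in U, y \in U & e x y].

Definition conn (U : {set T}) (x y : T) : bool := connect (restr U) x y.

Definition connected_graph (V : {set T}) : Prop :=
  forall x y, x \in V -> y \in V -> conn V x y.

Definition is_clique (S : {set T}) : Prop :=
  forall x y, x \in S -> y \in S -> x != y -> e x y.

Definition nbhd (V U : {set T}) : {set T} :=
  [set y in V | (y \notin U) && [exists x in U, e x y]].

Definition separator (V S : {set T}) (u v : T) : Prop :=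
  [/\ S \subset V, u \in V :\: S, v \in V :\: S & ~~ conn (V :\: S) u v].

Definition min_separator_uv (V S : {set T}) (u v : T) : Prop :=
  separator V S u v /\ forall S' : {set T}, S' \proper S -> ~ separator V S' u v.

Definition min_separator (V S : {set T}) : Prop :=
  exists u v, min_separator_uv V S u v.

Definition cross (V S S' : {set T}) : Prop :=
  exists u v, [/\ u \in S', v \in S' & separator V S u v].

Definition component (V S C : {set T}) : Prop :=
  exists2 x, x \in V :\: S & C = [set y in V :\: S | conn (V :\: S) x y].

End Graphs.

From mathcomp Require Import all_boot.
Set Implicit Arguments. Unset Strict Implicit. Unset Printing Implicit Defensive.

(* (1) A component C of g \ S is connected and every other vertex of
   C ∪ N(C) is adjacent to C, so deleting vertices of S, which all lie
   outside C, cannot disconnect C ∪ N(C).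
   (2) Every minimal (a,b)-separator S' is full: each of its vertices has a
   neighbour in the component of a, and likewise of b.  If S' ⊆ S, the full
   component of S then contains S' in its neighbourhood.  Otherwise pick
   w ∈ S' \ S.  Vertices of S' \ S lie in the component C of w, since S does
   not cross S'.  As S is a clique, it cannot meet both full components of
   S', so one of them, D, avoids S; D is connected and adjacent to w, hence
   D ⊆ C, and every vertex of S' ∩ S, being adjacent to D, lies in N(C). *)

Section MinimalSeparators.
Variables (T : finType) (e : rel T).
Hypothesis e_sym : symmetric e.
Implicit Types (U V W C D S X : {set T}) (a b c d u v w x y z : T).

Definition cc U x := [set y in U | conn e U x y].

Lemma restr_sym U : symmetric (restr e U).
Proof. by move=> x y; rewrite /restr e_sym andbCA. Qed.

Lemma conn_sym U x y : conn e U x y = conn e U y x.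
Proof. exact: (sym_connect_sym (@restr_sym U)). Qed.

Lemma conn_edge U x y : x \in U -> y \in U -> e x y -> conn e U x y.
Proof. by move=> xU yU exy; apply: connect1; rewrite /restr xU yU. Qed.

Lemma conn_sub U W x y : U \subset W -> conn e U x y -> conn e W x y.
Proof.
move=> sUW; apply: connect_sub => a b /and3P[aU bU eab].
by apply: conn_edge; rewrite ?(subsetP sUW).
Qed.

Lemma conn_closed U (A : {pred T}) x y :
  (forall a b, restr e U a b -> a \in A -> b \in A) ->
  x \in A -> conn e U x y -> y \in A.
Proof.
move=> clA xA /(closed_connect (intro_closed (sym_connect_sym (@restr_sym U)) clA)).
by rewrite xA.
Qed.

Lemma cc_sub U x : cc U x \subset U.
Proof. by apply/subsetP => y; rewrite inE => /andP[]. Qed.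

Lemma notin_cc_setD V S x y : y \in cc (V :\: S) x -> y \notin S.
Proof. by move/(subsetP (cc_sub _ _)); rewrite inE => /andP[]. Qed.

Lemma cc_edge U x y z : y \in cc U x -> z \in U -> e y z -> z \in cc U x.
Proof.
rewrite !inE => /andP[yU xy] zU eyz.
by rewrite zU; apply: connect_trans xy (conn_edge yU zU eyz).
Qed.

Lemma conn_cc U x y : y \in cc U x -> conn e (cc U x) x y.
Proof.
rewrite inE => /andP[_]; apply: (conn_closed (A := conn e (cc U x) x)).
  move=> a b /and3P[aU bU eab] xa; rewrite unfold_in /=.
  have aC : a \in cc U x by rewrite inE aU (conn_sub (cc_sub U x) xa).
  exact: connect_trans xa (conn_edge aC (cc_edge aC bU eab) eab).
by rewrite unfold_in /=; apply: connect0.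
Qed.

Lemma cc_connected U x y z : y \in cc U x -> z \in cc U x -> conn e (cc U x) y z.
Proof.
by move=> /conn_cc xy /conn_cc xz; rewrite conn_sym in xy; apply: connect_trans xz.
Qed.

Lemma connected_sub_cc U D w y0 : D \subset U ->
  (forall y z, y \in D -> z \in D -> conn e D y z) ->
  w \in U -> y0 \in D -> e w y0 -> D \subset cc U w.
Proof.
move=> sDU Dconn wU y0D ewy0; apply/subsetP => y yD.
rewrite inE (subsetP sDU y yD).
apply: connect_trans (conn_edge wU (subsetP sDU _ y0D) ewy0) _.
exact: conn_sub sDU (Dconn _ _ y0D yD).
Qed.

Lemma nbhdP V C z :
  reflect [/\ z \in V, z \notin C & exists2 y, y \in C & e y z] (z \in nbhd e V C).
Proof.
rewrite inE; apply: (iffP and3P) => [[zV zC /existsP[y /andP[yC eyz]]]|[zV zC [y yC eyz]]].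
  by split=> //; exists y.
by split=> //; apply/existsP; exists y; rewrite yC.
Qed.

Lemma nbhdS V C C' z : C \subset C' -> z \in nbhd e V C -> z \notin C' ->
  z \in nbhd e V C'.
Proof.
move=> sCC' /nbhdP[zV _ [y yC eyz]] zC'.
by apply/nbhdP; split=> //; exists y; rewrite ?(subsetP sCC').
Qed.

Lemma min_separator_uv_sym V S a b :
  min_separator_uv e V S a b -> min_separator_uv e V S b a.
Proof.
case=> [[sSV aVS bVS nab] Smin]; split; first by split; rewrite // conn_sym.
by move=> S' ltS'S [s1 s2 s3 s4]; apply: (Smin S' ltS'S); split; rewrite // conn_sym.
Qed.

(* Were some s ∈ S without a neighbour in the component of a, the component
   of a would stay closed in g \ (S \ s), so S \ s would still separate. *)
Lemma min_separator_full V S a b :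
  min_separator_uv e V S a b -> S \subset nbhd e V (cc (V :\: S) a).
Proof.
case=> [[sSV aVS bVS nab] Smin]; apply/subsetP => s sS.
have sC : s \notin cc (V :\: S) a by apply: contraL sS; apply: notin_cc_setD.
apply/nbhdP; split; rewrite ?(subsetP sSV) //.
apply/exists_inP; apply: contraR nab => /exists_inPn noadj.
have sub : V :\: S \subset V :\: (S :\ s) := setDS V (subsetDl S [set s]).
have nsep : ~ separator e V (S :\ s) a b by apply: Smin; apply: properD1.
have : conn e (V :\: (S :\ s)) a b.
  apply/negPn/negP => nab'; apply: nsep; split; rewrite ?(subsetP sub) //.
  exact: subset_trans (subsetDl S [set s]) sSV.
have aC : a \in cc (V :\: S) a by rewrite inE aVS; apply: connect0.
move=> ab; suff : b \in cc (V :\: S) a by rewrite inE => /andP[].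
apply: (conn_closed _ aC ab) => x y /and3P[_ yVs exy] xC.
have ys : y != s by apply: contraTneq (noadj x xC) => <-; rewrite negbK.
by apply: cc_edge xC _ exy; move: yVs; rewrite !inE ys.
Qed.

Lemma clique_misses_full_side V S S' a b : is_clique e S ->
  min_separator_uv e V S' a b ->
  exists c d, min_separator_uv e V S' c d /\ [disjoint cc (V :\: S') c & S].
Proof.
move=> Scl mS'; case: (boolP [disjoint cc (V :\: S') a & S]) => [dis|].
  by exists a, b.
rewrite disjoints_subset => /subsetPn[p pa]; rewrite inE negbK => pS.
exists b, a; split; first exact: min_separator_uv_sym.
rewrite disjoints_subset; apply/subsetP => q qb; rewrite inE.
apply/negP => qS; case: mS' => [[_ _ _ /negP nab] _]; apply: nab.
have edge_pq : conn e (V :\: S') p q.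
  have pU := subsetP (cc_sub _ _) p pa; have qU := subsetP (cc_sub _ _) q qb.
  by case: (eqVneq p q) => [<-|pq]; [apply: connect0 | apply: conn_edge; rewrite ?Scl].
move: pa qb; rewrite !inE => /andP[_ ap] /andP[_ bq].
by rewrite conn_sym in bq; apply: connect_trans (connect_trans ap edge_pq) bq.
Qed.

Lemma noncrossing_sub_cc_nbhd V S S' a b w : is_clique e S ->
  min_separator_uv e V S' a b -> ~ cross e V S S' -> S \subset V ->
  w \in S' -> w \notin S ->
  S' \subset cc (V :\: S) w :|: nbhd e V (cc (V :\: S) w).
Proof.
move=> Scl mS' noncross sSV wS' wS.
have sS'V : S' \subset V by case: mS' => [[]].
have wVS : w \in V :\: S by rewrite inE wS (subsetP sS'V).
apply/subsetP => z zS'; case: (boolP (z \in S)) => zS; last first.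
  have zVS : z \in V :\: S by rewrite inE zS (subsetP sS'V).
  apply/setUP; left; rewrite inE zVS /=; apply/negPn/negP => nwz.
  by apply: noncross; exists w, z.
have [c [d [mS'c Dnot]]] := clique_misses_full_side Scl mS'.
set D := cc (V :\: S') c; have DS' := min_separator_full mS'c.
have sDVS : D \subset V :\: S.
  apply/subsetP => y yD; rewrite inE (disjointFr Dnot yD).
  by move: (subsetP (cc_sub _ _) y yD); rewrite inE => /andP[].
have /nbhdP[_ _ [y yD eyw]] := subsetP DS' w wS'.
have sDC : D \subset cc (V :\: S) w.
  by apply: connected_sub_cc sDVS _ wVS yD _; [apply: cc_connected | rewrite e_sym].
apply/setUP; right; apply: nbhdS sDC (subsetP DS' z zS') _.
by apply: contraL zS; apply: notin_cc_setD.
Qed.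

Lemma no_separator_in_cc_nbhd V U X x u v : [disjoint cc U x & X] ->
  ~ separator e (cc U x :|: nbhd e V (cc U x)) X u v.
Proof.
move=> dis [_ uW vW /negP]; apply.
set C := cc U x; set W := (C :|: nbhd e V C) :\: X.
have sCW : C \subset W.
  by apply/subsetP => y yC; rewrite in_setD in_setU yC (disjointFr dis yC).
have xW : forall w, w \in W -> conn e W x w.
  move=> w wW; move: (wW); rewrite in_setD in_setU => /andP[_ /orP[wC|/nbhdP[_ _ [y yC eyw]]]].
    exact: conn_sub sCW (conn_cc wC).
  exact: connect_trans (conn_sub sCW (conn_cc yC)) (conn_edge (subsetP sCW y yC) wW eyw).
by have := xW u uW; rewrite conn_sym => ux; apply: connect_trans ux (xW v vW).
Qed.

End MinimalSeparators.

Theorem lemma6 (T : finType) (e : rel T) (V : {set T}) :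
  symmetric e -> irreflexive e ->
  connected_graph e V ->
  forall phi : {set {set T}},
    (forall S, S \in phi -> min_separator e V S) ->
    (forall S S', S \in phi -> S' \in phi -> S != S' -> ~ cross e V S S') ->
  forall S, S \in phi -> is_clique e S ->
    (forall C, component e V S C ->
       forall S' : {set T}, S' \subset S -> ~ min_separator e (C :|: nbhd e V C) S') /\
    (forall S', S' \in phi -> S' != S ->
       exists C, component e V S C /\ S' \subset C :|: nbhd e V C).
Proof.
move=> e_sym _ _ phi phi_min phi_noncross S Sphi Scl; split.
  move=> _ [x _ ->] S' sS'S [u [v [sep _]]]; move: sep.
  rewrite -/(cc e (V :\: S) x); apply: (no_separator_in_cc_nbhd e_sym).
  rewrite disjoints_subset; apply/subsetP => y /notin_cc_setD yS.
  by rewrite inE (contra (subsetP sS'S y) yS).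
move=> S' S'phi S'S.
have [a [b mS']] := phi_min S' S'phi; have [u [v mS]] := phi_min S Sphi.
have [[sSV uVS _ _] _] := mS.
case: (boolP (S' \subset S)) => [sS'S | /subsetPn[w wS' wS]].
  exists (cc e (V :\: S) u); split; first by exists u.
  exact: subset_trans sS'S (subset_trans (min_separator_full e_sym mS) (subsetUr _ _)).
have sS'V : S' \subset V by case: mS' => [[]].
exists (cc e (V :\: S) w); split; first by exists w; rewrite // inE wS (subsetP sS'V).
apply: (noncrossing_sub_cc_nbhd e_sym Scl mS' _ sSV wS' wS).
by apply: phi_noncross; rewrite // eq_sym.
Qed.
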